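(* Let $n\le N$ be positive integers and $r>0$. Let $\mathcal G_1,\mathcal G_2$ be nonempty families of subsets of $[N]$, each member having at most $n$ elements, and suppose both $\mathcal G_1$ and $\mathcal G_2$ are $r$-spread. If $r\ge 2^{12}\log_2(2n)$, then there exist $G_1\in\mathcal G_1$ and $G_2\in\mathcal G_2$ with $G_1\cap G_2=\emptyset$.
   Context: A family $\mathcal G$ of subsets of $[N]$ is $r$-spread if for every $S\subseteq[N]$, $|\{G\in\mathcal G: S\subseteq G\}|\le r^{-|S|}|\mathcal G|$. *)

From mathcomp Require Import all_boot all_order all_algebra.
From mathcomp Require Import all_classical all_reals all_analysis.
Set Implicit Arguments. Unset Strict Implicit. Unset Printing Implicit Defensive.
Import Order.TTheory GRing.Theory Num.Theory.
Local Open Scope ring_scope.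

Definition spread (R : realType) (N : nat) (r : R) (F : {set {set 'I_N}}) : Prop :=
  forall S : {set 'I_N},
    (#|[set G in F | S \subset G]|%:R : R) <= r ^- #|S| * (#|F|%:R).

Definition log2 (R : realType) (x : R) : R := ln x / ln 2.

From mathcomp Require Import all_boot all_order all_algebra.
From mathcomp Require Import reals exp lra zify.
Set Implicit Arguments. Unset Strict Implicit. Unset Printing Implicit Defensive.
Import Order.TTheory GRing.Theory Num.Theory.

(* Colour the ground set with 2L colours, where n < 2^L <= 2n.  For an r-spread
   family F, more than half of all colourings put some member of F entirely below
   colour L; applied to G1, and to G2 with the colours reversed, this gives one
   colouring placing a member of G1 below L and a member of G2 at or above L.

   The bound comes from an encoding argument.  Reveal the colour classes W_0, W_1,
   ... one at a time and attach to each member A a fragment T_i(A) of A: T_(i+1)(A)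
   is T_i(X) \ W_i for the member X minimising this set among those with
   |T_i(X)| <= n/2^i and T_i(X) ⊆ T_i(A) ∪ W_i.  Some member of F always lies in
   T_i(A) ∪ W_0 ∪ ... ∪ W_(i-1), so if the fragments keep halving then T_L(A) is
   empty and we are done.  If halving fails at round i with new fragment S, recolour
   S with colour i: the new colouring alone determines a set of size <= n/2^i
   containing S, and then the pair (old colouring, A) up to (2L)^|S| r^-|S| |F|
   choices by spreadness.  As |S| > n/2^(i+1), summing over rounds and over S gives
   a geometric series, a small fraction of all pairs (colouring, member). *)

Local Open Scope ring_scope.

Lemma sum_geometric_le (R : realFieldType) (z : R) (L : nat) :
  0 <= z -> z <= 1 / 2 -> \sum_(i < L) z ^+ (L - i) <= 2 * z.
Proof.
move=> z_ge0 z_le; elim: L => [|L IH]; first by rewrite big_ord0 mulr_ge0.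
rewrite big_ord_recr /= subSnn expr1.
have -> : \sum_(i < L) z ^+ (L.+1 - i) = z * \sum_(i < L) z ^+ (L - i).
  by rewrite mulr_sumr; apply: eq_bigr => i _; rewrite subSn ?exprS // ltnW.
apply: (@le_trans _ _ (z * (2 * z) + z)); first by rewrite lerD2r ler_wpM2l.
nra.
Qed.

Lemma sum_powerset_ge_le (R : realFieldType) (T : finType) (K : {set T})
    (y : R) (s : nat) :
  0 <= y <= 1 ->
  \sum_(S in powerset K | (s <= #|S|)%N) y ^+ #|S| <= 2 ^+ #|K| * y ^+ s.
Proof.
case/andP=> y_ge0 y_le1.
apply: (@le_trans _ _ (\sum_(S in powerset K) y ^+ s)).
  rewrite big_mkcondr /=; apply: ler_sum => S _.
  by case: ifP => [/ler_wiXn2l->|_]; rewrite ?exprn_ge0.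
by rewrite sumr_const card_powerset -[_ *+ _]mulr_natl natrX.
Qed.

Lemma card_sum_fibers (T U : finType) (A : {set T}) (f : T -> U) :
  #|A| = (\sum_u #|[set x in A | f x == u]|)%N.
Proof.
rewrite -sum1_card (partition_big f predT) //; apply: eq_bigr => u _.
by rewrite -sum1_card; apply: eq_bigl => x; rewrite !inE.
Qed.

Local Close Scope ring_scope.

Section Fragments.
Variables (N M n : nat) (F : {set {set 'I_N}}).

Local Notation colouring := {ffun 'I_N -> 'I_M.+1}.
Implicit Types (c : colouring) (A C S W X Y : {set 'I_N}) (i k : nat).

Definition colour_class c i := [set x | c x == i :> nat].
Definition below c i := [set x | c x < i].
Definition quota i := n %/ 2 ^ i.

Section Step.
Variables (frag : {set 'I_N} -> {set 'I_N}) (W : {set 'I_N}) (k : nat).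

Definition admissible A X := [&& X \in F, #|frag X| <= k & frag X \subset frag A :|: W].
(* When no member is admissible, [arg min] defaults to [A] itself. *)
Definition best A := [arg min_(X < A | admissible A X) #|frag X :\: W|].
Definition next_fragment A := frag (best A) :\: W.

Lemma best_eqVadmissible A : best A = A \/ admissible A (best A).
Proof.
by rewrite /best /arg_min /extremum; case: pickP => [X /andP[]|]; [right | left].
Qed.

Lemma best_in A : A \in F -> best A \in F.
Proof. by case: (best_eqVadmissible A) => [-> | /and3P[]]. Qed.

Lemma next_fragment_sub A : next_fragment A \subset frag A.
Proof.
rewrite /next_fragment; case: (best_eqVadmissible A) => [-> | /and3P[_ _ sub]].
  exact: subsetDl.
by rewrite subDset setUC.
Qed.

Section Minimality.
Variable A : {set 'I_N}.
Hypotheses (AF : A \in F) (A_small : #|frag A| <= k).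

Lemma admissible_self : admissible A A.
Proof. by rewrite /admissible AF A_small subsetUl. Qed.

Lemma best_admissible : admissible A (best A).
Proof. by rewrite /best; case: arg_minnP; first exact: admissible_self. Qed.

Lemma next_fragment_min Y : admissible A Y -> #|next_fragment A| <= #|frag Y :\: W|.
Proof.
rewrite /next_fragment /best.
by case: arg_minnP => [|X _ X_min /X_min]; first exact: admissible_self.
Qed.

End Minimality.

End Step.

Fixpoint fragment i c : {set 'I_N} -> {set 'I_N} :=
  if i is j.+1 then next_fragment (fragment j c) (colour_class c j) (quota j) else id.

Definition small i c A := #|fragment i c A| <= quota i.

Lemma fragment_sub i c A : fragment i c A \subset A.
Proof.
elim: i A => [|i IH] A /=; first exact: subxx.
exact: subset_trans (next_fragment_sub _ _ _ _) (IH A).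
Qed.

Lemma fragment_colour_ge i c A x : A \in F -> x \in fragment i c A -> i <= c x.
Proof.
elim: i A => [|i IH] A AF //=.
rewrite /next_fragment !inE => /andP[x_ni /(IH _ (best_in (fragment i c) (colour_class c i) (quota i) AF))].
by rewrite leq_eqVlt eq_sym (negbTE x_ni).
Qed.

Lemma fragment_cover i c A : A \in F ->
  exists2 C, C \in F & C \subset fragment i c A :|: below c i.
Proof.
elim: i A => [|i IH] A AF /=; first by exists A; rewrite ?subsetUl.
have [C CF sub] := IH _ (best_in (fragment i c) (colour_class c i) (quota i) AF).
exists C => //; apply: subset_trans sub _; apply/subsetP => x.
rewrite /next_fragment !inE ltnS => /orP[x_frag | x_lt]; last by rewrite ltnW ?orbT.
by rewrite x_frag andbT leq_eqVlt; case: eqP.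
Qed.

Lemma eq_fragment i c c' :
  (forall x, (c x < i) || (c' x < i) -> c x = c' x) -> fragment i c = fragment i c'.
Proof.
elim: i => [//|i IH] eq_c /=.
have -> : fragment i c = fragment i c'.
  by apply: IH => x lt_i; apply: eq_c; case/orP: lt_i => /leqW ->; rewrite ?orbT.
congr next_fragment; apply/setP => x; rewrite !inE.
case: (boolP ((c x < i.+1) || (c' x < i.+1))) => [/eq_c -> // |].
by rewrite negb_or -!leqNgt => /andP[cx_gt c'x_gt]; rewrite !gtn_eqF.
Qed.

(* The decoder of the encoding argument: it reads only the colouring, yet by
   [fragment_sub_canonical] it contains a fragment that failed to halve at round i
   once that fragment is recoloured with colour i. *)
Definition canonical_fragment i c :=
  fragment i c (odflt set0
    [pick X | [&& X \in F, small i c X & fragment i c X \subset colour_class c i]]).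

Lemma card_canonical_fragment i c : #|canonical_fragment i c| <= quota i.
Proof.
rewrite /canonical_fragment; case: pickP => [X /and3P[] // | _] /=.
by have := fragment_sub i c set0; rewrite subset0 => /eqP ->; rewrite cards0.
Qed.

Definition recolour c S i : colouring := [ffun x => if x \in S then inord i else c x].

Lemma fragment_recolour i c S :
  {in S, forall x, i < c x} -> fragment i (recolour c S i) = fragment i c.
Proof.
move=> S_above; apply: eq_fragment => x; rewrite ffunE.
case: ifP => [xS | //]; have i_lt := S_above x xS.
have i_le : i < M.+1 := ltn_trans i_lt (ltn_ord (c x)).
rewrite inordK // ltnn /= => /(ltn_trans i_lt).
by rewrite ltnn.
Qed.

Lemma colour_class_recolour i c S :
  i <= M -> colour_class (recolour c S i) i = colour_class c i :|: S.
Proof.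
move=> iM; apply/setP => x; rewrite !inE ffunE.
by case: ifP => _; rewrite ?orbT ?orbF // inordK ?eqxx.
Qed.

Lemma fragment_sub_canonical i c A : i <= M -> A \in F -> small i c A ->
  fragment i.+1 c A \subset canonical_fragment i (recolour c (fragment i.+1 c A) i).
Proof.
move=> iM AF A_small; set S := fragment i.+1 c A; set W := colour_class c i.
have S_above : {in S, forall x, i < c x} by move=> x; apply: fragment_colour_ge.
have S_sub : S \subset fragment i c A by apply: next_fragment_sub.
have [B /and3P[BF B_small B_sub] ->] : exists2 B,
    [&& B \in F, #|fragment i c B| <= quota i & fragment i c B \subset W :|: S] &
    canonical_fragment i (recolour c S i) = fragment i c B.
  rewrite /canonical_fragment /small fragment_recolour // colour_class_recolour //.
  case: pickP => [B pick_B | no_pick]; first by exists B.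
  have /and3P[XF X_small _] := best_admissible W AF A_small.
  by have := no_pick (best (fragment i c) W (quota i) A); rewrite XF X_small -subDset subxx.
have B_adm : admissible (fragment i c) W (quota i) A B.
  by rewrite /admissible BF B_small (subset_trans B_sub) // setUC setSU.
have B_out_W : fragment i c B :\: W \subset S by rewrite subDset.
suff <- : fragment i c B :\: W = S by apply: subsetDl.
by apply/eqP; rewrite eqEcard B_out_W (next_fragment_min AF A_small B_adm).
Qed.

Definition breaks i := [set p : colouring * {set 'I_N} |
  [&& p.2 \in F, small i p.1 p.2 & ~~ small i.+1 p.1 p.2]].

Definition encode i (p : colouring * {set 'I_N}) :=
  (recolour p.1 (fragment i.+1 p.1 p.2) i, fragment i.+1 p.1 p.2).

Definition fiber i c' S := [set p in breaks i | encode i p == (c', S)].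

Definition agree_off c' S := [set c : colouring | [forall x in ~: S, c x == c' x]].

Lemma card_agree_off c' S : #|agree_off c' S| <= M.+1 ^ #|S|.
Proof.
pose restrict c : colouring := [ffun x => if x \in S then c x else ord0].
have restrict_inj : {in agree_off c' S &, injective restrict}.
  move=> c1 c2; rewrite !inE => /forall_inP c1E /forall_inP c2E /ffunP eq12.
  apply/ffunP => x; have := eq12 x; rewrite !ffunE.
  case: ifP => [// | xS _]; have x_out : x \in ~: S by rewrite inE xS.
  by rewrite (eqP (c1E x x_out)) (eqP (c2E x x_out)).
rewrite -(card_in_imset restrict_inj).
have -> : M.+1 ^ #|S| = #|pffun_on (@ord0 M) S predT|.
  by rewrite card_pffun_on cardT size_enum_ord.
apply/subset_leq_card/subsetP => _ /imsetP[c _ ->].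
apply/pffun_onP; split=> // ; apply/subsetP => x.
by rewrite inE ffunE; case: ifP; rewrite ?eqxx.
Qed.

Lemma fiber_sub i c' S :
  fiber i c' S \subset setX (agree_off c' S) [set A in F | S \subset A].
Proof.
apply/subsetP => -[c A]; rewrite !inE /= => /andP[/and3P[AF _ _] /eqP[<- <-]].
rewrite AF (fragment_sub i.+1) !andbT; apply/forall_inP => x; rewrite inE => x_out.
by rewrite ffunE (negbTE x_out).
Qed.

Lemma fiber_mem_cond i c' S p : i <= M -> p \in fiber i c' S ->
  (S \in powerset (canonical_fragment i c')) && (quota i.+1 < #|S|).
Proof.
case: p => c A iM; rewrite !inE /= => /andP[/and3P[AF A_small A_breaks] /eqP[<- <-]].
by rewrite fragment_sub_canonical // ltnNge.
Qed.

Lemma quota_le_double i : quota i <= 2 * quota i.+1 + 1.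
Proof.
rewrite /quota expnSr divnMA; set k := n %/ 2 ^ i.
by have := divn_eq k 2; have := ltn_pmod k (isT : 0 < 2); lia.
Qed.

Lemma subn_le_quota L i : 2 ^ L <= 2 * n -> i < L -> L - i <= (quota i.+1).+1.
Proof.
move=> L_le i_lt; case: (ltnP i.+1 L) => [i_lt' | ]; last by lia.
have L_eq : L = (L - i.+2) + i.+2 by rewrite subnK.
have pow_le : 2 ^ (L - i.+2) <= quota i.+1.
  rewrite /quota leq_divRL ?expn_gt0 // -expnD.
  by move: L_le; rewrite {1}L_eq addnS expnS leq_pmul2l.
by have := ltn_expl (L - i.+2) (isT : 1 < 2); lia.
Qed.

Hypothesis F_small : {in F, forall A, #|A| <= n}.

Definition oversized L := [set p : colouring * {set 'I_N} | (p.2 \in F) && ~~ small L p.1 p.2].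

Lemma card_oversized_le_sum L : #|oversized L| <= \sum_(i < L) #|breaks i|.
Proof.
elim: L => [|L IH].
  rewrite big_ord0 leqn0 cards_eq0; apply/eqP/setP => -[c A]; rewrite !inE /=.
  by case AF: (A \in F) => //=; rewrite /small /quota expn0 divn1 F_small.
rewrite big_ord_recr /= (leq_trans _ (leq_add IH (leqnn _))) //.
apply: leq_trans (leq_card_setU _ _); apply/subset_leq_card/subsetP => -[c A].
by rewrite !inE /= => /andP[-> ->]; case: small.
Qed.

Section Counting.
Variables (R : realType) (r : R).
Hypotheses (r_gt0 : (0 < r)%R) (F_spread : spread r F).

Local Open Scope ring_scope.

Let y : R := M.+1%:R / r.

Let y_ge0 : 0 <= y. Proof. by rewrite divr_ge0 ?ltW. Qed.

Lemma card_fiber_le i c' S : (i <= M)%N ->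
  #|fiber i c' S|%:R <=
    if (S \in powerset (canonical_fragment i c')) && (quota i.+1 < #|S|)%N
    then y ^+ #|S| * #|F|%:R else 0.
Proof.
move=> iM; have [-> | [p p_fiber]] := set_0Vmem (fiber i c' S).
  by rewrite cards0; case: ifP; rewrite ?mulr_ge0 ?exprn_ge0.
rewrite (fiber_mem_cond iM p_fiber).
apply: (@le_trans _ _ (#|agree_off c' S|%:R * #|[set A in F | S \subset A]|%:R)).
  by rewrite -natrM ler_nat -cardsX subset_leq_card ?fiber_sub.
by rewrite expr_div_n -mulrA ler_pM ?F_spread // -natrX ler_nat card_agree_off.
Qed.

Lemma card_breaks_le i : (i <= M)%N -> y <= 1 ->
  #|breaks i|%:R <=
    #|{: colouring}|%:R * (2 ^+ quota i * y ^+ (quota i.+1).+1) * #|F|%:R.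
Proof.
move=> iM y_le1; rewrite (card_sum_fibers _ (encode i)) natr_sum.
rewrite -(pair_big xpredT xpredT (fun c' S => #|fiber i c' S|%:R)).
rewrite -mulrA mulr_natl -sumr_const; apply: ler_sum => c' _.
apply: (le_trans (ler_sum _ (fun S _ => card_fiber_le c' S iM))).
rewrite -big_mkcond /= -mulr_suml ler_wpM2r //.
apply: le_trans (sum_powerset_ge_le _ _ _) _; first by rewrite y_ge0.
rewrite ler_wpM2r ?exprn_ge0 // ler_eXn2l ?ltr1n //.
exact: card_canonical_fragment.
Qed.

Lemma quota_term_le L i : (2 ^ L <= 2 * n)%N -> (i < L)%N -> 4 * y <= 1 ->
  2 ^+ quota i * y ^+ (quota i.+1).+1 <= (4 * y) ^+ (L - i).
Proof.
move=> L_le i_lt y_le.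
apply: le_trans (ler_wiXn2l _ y_le (subn_le_quota L_le i_lt)); last first.
  by rewrite mulr_ge0.
have -> : (4 : R) = 2 ^+ 2 by rewrite -natrX.
rewrite [(_ * y) ^+ _]exprMn -exprM ler_wpM2r ?exprn_ge0 // ler_eXn2l ?ltr1n //.
by have := quota_le_double i; lia.
Qed.

Lemma card_oversized_le L : (2 ^ L <= 2 * n)%N -> (L <= M.+1)%N -> y <= 1 / 8 ->
  #|oversized L|%:R <= #|{: colouring}|%:R * #|F|%:R * (8 * y).
Proof.
move=> L_le LM y_le.
apply: (@le_trans _ _ (\sum_(i < L) #|breaks i|%:R)).
  by rewrite -natr_sum ler_nat card_oversized_le_sum.
apply: (@le_trans _ _ (\sum_(i < L) #|{: colouring}|%:R * #|F|%:R * (4 * y) ^+ (L - i))).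
  apply: ler_sum => i _; have iM : (i <= M)%N by rewrite -ltnS (leq_trans _ LM).
  apply: le_trans (card_breaks_le iM _) _; first lra.
  by rewrite mulrAC ler_wpM2l ?mulr_ge0 ?quota_term_le //; lra.
rewrite -mulr_sumr ler_wpM2l ?mulr_ge0 // (_ : 8 * y = 2 * (4 * y)); last by rewrite mulrA -natrM.
by apply: sum_geometric_le; have := y_ge0; lra.
Qed.

Definition no_member_below L :=
  [set c : colouring | [forall A in F, ~~ (A \subset below c L)]].

Lemma card_no_member_below L : (n < 2 ^ L)%N -> (2 ^ L <= 2 * n)%N -> (L <= M.+1)%N ->
  F != set0 -> 16 * M.+1%:R < r -> (#|no_member_below L|.*2 < #|{: colouring}|)%N.
Proof.
move=> n_lt L_le LM F_neq0 r_large.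
have y_lt : y < 1 / 16 by rewrite /y ltr_pdivrMr // mul1r ltr_pdivlMl // mulrC.
have sub : setX (no_member_below L) F \subset oversized L.
  apply/subsetP => -[c A]; rewrite !inE /= => /andP[/forall_inP no_member AF].
  rewrite AF /=; apply/negP => A_small.
  have frag0 : fragment L c A = set0.
    by apply/eqP; rewrite -cards_eq0 -leqn0 (leq_trans A_small) // /quota divn_small.
  have [C CF] := fragment_cover L c AF; rewrite frag0 set0U.
  by apply/negP/no_member.
have F_gt0 : (0 : R) < #|F|%:R by rewrite ltr0n lt0n cards_eq0.
have : #|no_member_below L|%:R * #|F|%:R <= #|{: colouring}|%:R * #|F|%:R * (8 * y).
  rewrite -natrM -cardsX; apply: le_trans (card_oversized_le L_le LM _); last lra.
  by rewrite ler_nat subset_leq_card.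
rewrite mulrAC ler_pM2r // -(ltr_nat R) -mul2n natrM.
have : (0 : R) < #|{: colouring}|%:R by rewrite ltr0n card_ffun card_ord expn_gt0.
set C := (#|{: colouring}|%:R : R); set B := (#|no_member_below L|%:R : R).
nra.
Qed.

End Counting.

End Fragments.

Lemma below_rev_colouring N M (c : {ffun 'I_N -> 'I_M.+1}) L :
  below [ffun x => rev_ord (c x)] L = [set x | M.+1 - L <= c x].
Proof. by apply/setP => x; rewrite !inE ffunE /=; have := ltn_ord (c x); lia. Qed.

Lemma exists_disjoint_members N M L (G1 G2 : {set {set 'I_N}}) :
  L + L <= M.+1 ->
  #|no_member_below M G1 L|.*2 < #|{: {ffun 'I_N -> 'I_M.+1}}| ->
  #|no_member_below M G2 L|.*2 < #|{: {ffun 'I_N -> 'I_M.+1}}| ->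
  exists2 A, A \in G1 & exists2 B, B \in G2 & A :&: B = set0.
Proof.
move=> LM card_B1 card_B2.
pose rev (c : {ffun 'I_N -> 'I_M.+1}) := [ffun x => rev_ord (c x)].
have rev_inv : involutive rev by move=> c; apply/ffunP => x; rewrite !ffunE rev_ordK.
set B1 := no_member_below M G1 L in card_B1 *.
set B2 := rev @^-1: no_member_below M G2 L.
have /card_gt0P[c] : 0 < #|~: (B1 :|: B2)|.
  have : #|B1 :|: B2| + #|~: (B1 :|: B2)| = #|{: {ffun 'I_N -> 'I_M.+1}}| := cardsC _.
  have := (leq_card_setU B1 B2).1.
  by rewrite card_preimset; [lia | exact: inv_inj].
rewrite !inE negb_or => /andP[/forall_inPn[A AG1 /negbNE A_below]].
move=> /forall_inPn[B BG2 /negbNE]; rewrite below_rev_colouring => B_above.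
exists A => //; exists B => //; apply/setP => x; rewrite !inE.
apply/andP => -[/(subsetP A_below) xA /(subsetP B_above) xB].
by move: xA xB; rewrite !inE; lia.
Qed.

Local Open Scope ring_scope.

Lemma natr_le_log2 (R : realType) (L m : nat) :
  (0 < m)%N -> (2 ^ L <= m)%N -> L%:R <= log2 (m%:R : R).
Proof.
move=> m_gt0 Lm; have ln2_gt0 : 0 < ln (2 : R) by rewrite ln_gt0 // ltr1n.
rewrite /log2 ler_pdivlMr // mulrC [X in X <= _]mulr_natr -lnXn //.
by rewrite ler_ln ?posrE ?exprn_gt0 ?ltr0n // -natrX ler_nat.
Qed.

Theorem corollary2p7 (R : realType) (n N : nat) (r : R)
  (G1 G2 : {set {set 'I_N}}) :
  (0 < n)%N -> (n <= N)%N -> 0 < r ->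
  G1 != finset.set0 -> G2 != finset.set0 ->
  (forall G, G \in G1 -> (#|G| <= n)%N) ->
  (forall G, G \in G2 -> (#|G| <= n)%N) ->
  spread r G1 -> spread r G2 ->
  (2 ^+ 12 : R) * log2 (2 * n%:R) <= r ->
  exists2 A, A \in G1 & exists2 B, B \in G2 & A :&: B = finset.set0.
Proof.
move=> n_gt0 _ r_gt0 G1_neq0 G2_neq0 G1_small G2_small G1_spread G2_spread r_large.
set L := (trunc_log 2 n).+1.
have /andP[n_lt L_le] : (n < 2 ^ L <= 2 * n)%N.
  have /andP[lo hi] := trunc_log_bounds (isT : (1 < 2)%N) n_gt0.
  by rewrite hi /= expnS leq_pmul2l.
set M := (L + L).-1.
have M_eq : M.+1 = (L + L)%N by rewrite /M prednK // addn_gt0.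
have r_large' : 16 * M.+1%:R < r.
  have L_log : L%:R <= log2 (2 * n%:R : R) by rewrite -natrM natr_le_log2 ?muln_gt0.
  have L_gt0 : (0 : R) < L%:R by rewrite ltr0n.
  have pow12 : (2 ^+ 12 : R) = 4096%:R by rewrite -natrX.
  by rewrite M_eq natrD; rewrite pow12 in r_large; lra.
apply: (exists_disjoint_members (M := M) (L := L)); first by rewrite M_eq.
  by apply: (card_no_member_below G1_small r_gt0) => //; rewrite M_eq leq_addl.
by apply: (card_no_member_below G2_small r_gt0) => //; rewrite M_eq leq_addl.
Qed.
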